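(* Consider the Kudryashov–Sinelshchikov equation $$F:=u_t+uu_x-(1+u)u_{xx}-u_x^2=0$$ for $u=u(t,x)$. Each of the following pairs $(C^1,C^2)$ is a conserved vector for this equation, i.e. $D_tC^1+D_xC^2=0$ holds on every (sufficiently smooth) solution $u$: (1) $C^1=-u_x e^{-t-x}$, $C^2=\big(u_t+(1+u)u_x\big)e^{-t-x}$; (2) $C^1=\big(\tfrac{u^2}{2}-(1+u)u_x\big)e^{-t-x}$, $C^2=\big(-\tfrac{u^2}{2}+(1+u)u_t+(1+u)u_x\big)e^{-t-x}$; (3) $C^1=\big(-(1+u)+\tfrac{t u^2}{2}-t u u_x\big)e^{-t-x}$, $C^2=\big((1+u)+(1+u)u_x+\tfrac{u^2}{2}+t u u_t-\tfrac{t u^2}{2}\big)e^{-t-x}$.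
   Context: $D_t$ and $D_x$ denote the total derivative operators with respect to $t$ and $x$. *)

From Stdlib Require Import Reals.
From Coquelicot Require Import Coquelicot.
Open Scope R_scope.

Definition p_t (f : R -> R -> R) (t x : R) : R := Derive (fun s => f s x) t.
Definition p_x (f : R -> R -> R) (t x : R) : R := Derive (fun y => f t y) x.

Definition is_C2 (u : R -> R -> R) : Prop :=
  forall t x,
    ex_derive (fun s => u s x) t /\ ex_derive (fun y => u t y) x /\
    ex_derive (fun s => p_t u s x) t /\ ex_derive (fun y => p_t u t y) x /\
    ex_derive (fun s => p_x u s x) t /\ ex_derive (fun y => p_x u t y) x /\
    continuity_2d_pt u t x /\
    continuity_2d_pt (p_t u) t x /\ continuity_2d_pt (p_x u) t x /\
    continuity_2d_pt (p_t (p_t u)) t x /\ continuity_2d_pt (p_x (p_t u)) t x /\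
    continuity_2d_pt (p_t (p_x u)) t x /\ continuity_2d_pt (p_x (p_x u)) t x.

Definition KS_solution (u : R -> R -> R) : Prop :=
  forall t x,
    p_t u t x + u t x * p_x u t x - (1 + u t x) * p_x (p_x u) t x
      - (p_x u t x) ^ 2 = 0.

(* (C1, C2), evaluated along u, is a conserved vector: D_t C1 + D_x C2 = 0.
   Along a given u, the total derivatives D_t, D_x are the partial
   derivatives of the composite functions (t,x) |-> C^i(t,x,u,u_t,u_x,...). *)
Definition conserved (C1 C2 : R -> R -> R) : Prop :=
  forall t x, p_t C1 t x + p_x C2 t x = 0.

Definition C1_1 (u : R -> R -> R) (t x : R) : R :=
  - p_x u t x * exp (- t - x).
Definition C2_1 (u : R -> R -> R) (t x : R) : R :=
  (p_t u t x + (1 + u t x) * p_x u t x) * exp (- t - x).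

Definition C1_2 (u : R -> R -> R) (t x : R) : R :=
  ((u t x) ^ 2 / 2 - (1 + u t x) * p_x u t x) * exp (- t - x).
Definition C2_2 (u : R -> R -> R) (t x : R) : R :=
  (- (u t x) ^ 2 / 2 + (1 + u t x) * p_t u t x + (1 + u t x) * p_x u t x)
    * exp (- t - x).

Definition C1_3 (u : R -> R -> R) (t x : R) : R :=
  (- (1 + u t x) + t * (u t x) ^ 2 / 2 - t * u t x * p_x u t x) * exp (- t - x).
Definition C2_3 (u : R -> R -> R) (t x : R) : R :=
  ((1 + u t x) + (1 + u t x) * p_x u t x + (u t x) ^ 2 / 2
     + t * u t x * p_t u t x - t * (u t x) ^ 2 / 2) * exp (- t - x).

(** The three vectors share the multiplier [exp (- t - x)]: writing
    [C^i = P^i e^{-t-x}], one has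
    [D_t C^1 + D_x C^2 = (D_t P^1 + D_x P^2 - P^1 - P^2) e^{-t-x}],
    so it suffices to check [D_t P^1 + D_x P^2 = P^1 + P^2] for each pair of
    characteristics.  Expanding both total derivatives, this identity follows
    from the equality of the mixed derivatives [u_tx = u_xt] (Schwarz) and the
    equation [u_t = (1 + u) u_xx + u_x^2 - u u_x]. *)

From Stdlib Require Import Reals.
From Coquelicot Require Import Coquelicot.
Open Scope R_scope.

Lemma is_derive_exp_weight_t (t x : R) :
  is_derive (fun s => exp (- s - x)) t (- exp (- t - x)).
Proof. auto_derive; [exact I | unfold Rminus; ring]. Qed.

Lemma is_derive_exp_weight_x (t x : R) :
  is_derive (fun y => exp (- t - y)) x (- exp (- t - x)).
Proof. auto_derive; [exact I | unfold Rminus; ring]. Qed.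

Lemma conserved_exp_weight (P1 P2 dP1 dP2 : R -> R -> R) :
  (forall t x, is_derive (fun s => P1 s x) t (dP1 t x)) ->
  (forall t x, is_derive (fun y => P2 t y) x (dP2 t x)) ->
  (forall t x, dP1 t x + dP2 t x = P1 t x + P2 t x) ->
  conserved (fun t x => P1 t x * exp (- t - x))
            (fun t x => P2 t x * exp (- t - x)).
Proof.
  intros D1 D2 E t x; unfold p_t, p_x; cbv beta.
  assert (Dt : Derive (fun s => P1 s x * exp (- s - x)) t
               = dP1 t x * exp (- t - x) + P1 t x * - exp (- t - x)).
  { apply is_derive_unique.
    exact (is_derive_mult _ _ _ _ _ (D1 t x) (is_derive_exp_weight_t t x) Rmult_comm). }
  assert (Dx : Derive (fun y => P2 t y * exp (- t - y)) x
               = dP2 t x * exp (- t - x) + P2 t x * - exp (- t - x)).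
  { apply is_derive_unique.
    exact (is_derive_mult _ _ _ _ _ (D2 t x) (is_derive_exp_weight_x t x) Rmult_comm). }
  rewrite Dt, Dx.
  transitivity ((dP1 t x + dP2 t x - (P1 t x + P2 t x)) * exp (- t - x));
    [ring | rewrite E; ring].
Qed.

Section KudryashovSinelshchikov.

Variable u : R -> R -> R.
Hypothesis u_C2 : is_C2 u.
Hypothesis u_KS : KS_solution u.

Lemma p_t_p_x_comm (t x : R) : p_t (p_x u) t x = p_x (p_t u) t x.
Proof.
  unfold p_t, p_x; apply Schwarz.
  - exists (mkposreal 1 Rlt_0_1); intros a b _ _.
    destruct (u_C2 a b) as (?&?&?&?&?&?&_); tauto.
  - apply u_C2.
  - apply u_C2.
Qed.

Lemma KS_p_t (t x : R) :
  p_t u t x = (1 + u t x) * p_x (p_x u) t x + p_x u t x ^ 2 - u t x * p_x u t x.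
Proof.
  rewrite <- (Rminus_0_r (p_t u t x)), <- (u_KS t x); ring.
Qed.

Ltac derive_along_u t x :=
  auto_derive; [destruct (u_C2 t x) as (?&?&?&?&?&?&_); tauto | unfold p_t, p_x; field].

Lemma conserved_1 : conserved (C1_1 u) (C2_1 u).
Proof.
  apply (conserved_exp_weight
           (fun t x => - p_x u t x)
           (fun t x => p_t u t x + (1 + u t x) * p_x u t x)
           (fun t x => - p_t (p_x u) t x)
           (fun t x => p_x (p_t u) t x + p_x u t x ^ 2
                       + (1 + u t x) * p_x (p_x u) t x));
    intros t x; [derive_along_u t x | derive_along_u t x |].
  rewrite p_t_p_x_comm, KS_p_t; field.
Qed.

Lemma conserved_2 : conserved (C1_2 u) (C2_2 u).
Proof.
  apply (conserved_exp_weight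
           (fun t x => u t x ^ 2 / 2 - (1 + u t x) * p_x u t x)
           (fun t x => - u t x ^ 2 / 2 + (1 + u t x) * p_t u t x
                       + (1 + u t x) * p_x u t x)
           (fun t x => u t x * p_t u t x - p_t u t x * p_x u t x
                       - (1 + u t x) * p_t (p_x u) t x)
           (fun t x => - u t x * p_x u t x + p_x u t x * p_t u t x
                       + (1 + u t x) * p_x (p_t u) t x + p_x u t x ^ 2
                       + (1 + u t x) * p_x (p_x u) t x));
    intros t x; [derive_along_u t x | derive_along_u t x |].
  rewrite p_t_p_x_comm, KS_p_t; field.
Qed.

Lemma conserved_3 : conserved (C1_3 u) (C2_3 u).
Proof.
  apply (conserved_exp_weight
           (fun t x => - (1 + u t x) + t * u t x ^ 2 / 2 - t * u t x * p_x u t x)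
           (fun t x => (1 + u t x) + (1 + u t x) * p_x u t x + u t x ^ 2 / 2
                       + t * u t x * p_t u t x - t * u t x ^ 2 / 2)
           (fun t x => - p_t u t x + u t x ^ 2 / 2 + t * u t x * p_t u t x
                       - u t x * p_x u t x - t * p_t u t x * p_x u t x
                       - t * u t x * p_t (p_x u) t x)
           (fun t x => p_x u t x + p_x u t x ^ 2 + (1 + u t x) * p_x (p_x u) t x
                       + u t x * p_x u t x + t * p_x u t x * p_t u t x
                       + t * u t x * p_x (p_t u) t x - t * u t x * p_x u t x));
    intros t x; [derive_along_u t x | derive_along_u t x |].
  rewrite p_t_p_x_comm, KS_p_t; field.
Qed.

End KudryashovSinelshchikov.

Theorem mainTheorem5 (u : R -> R -> R) :
  is_C2 u -> KS_solution u ->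
  conserved (C1_1 u) (C2_1 u) /\
  conserved (C1_2 u) (C2_2 u) /\
  conserved (C1_3 u) (C2_3 u).
Proof.
  intros Hu Hks.
  exact (conj (conserved_1 u Hu Hks)
              (conj (conserved_2 u Hu Hks) (conserved_3 u Hu Hks))).
Qed.
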